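(* Let $I$ be an open interval with $a=\inf I$, $S$ a nonempty set, $F:I\to S$, $\varphi\in\mathrm{Homeo}^+(I)$, and $t\in I$, and suppose $F$ is $\varphi$-invariant before $t$, i.e., $F(x)=F(\varphi(x))$ for all $x\in(a,t)$. Then there is a function $H:I\to S$ that extends $F|_{(a,t)}$ and is $\varphi$-invariant, i.e., $H=H\circ\varphi$.
   Context: $\mathrm{Homeo}^+(I)$ is the group of increasing homeomorphisms of $I$. *)

From mathcomp Require Import all_boot all_order all_algebra.
From mathcomp Require Import all_classical all_reals all_analysis.
Set Implicit Arguments. Unset Strict Implicit. Unset Printing Implicit Defensive.
Import Order.TTheory GRing.Theory Num.Theory numFieldNormedType.Exports.
Local Open Scope classical_set_scope.
Local Open Scope ring_scope.

(* The open interval (a, b) of R with extended-real endpoints a < b;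
   then a = inf I. *)
Definition oitv {R : realType} (a b : \bar R) : set R :=
  [set x : R | (a < x%:E)%E /\ (x%:E < b)%E].

(* phi (a function R -> R, only its values on I matter) is an element of
   Homeo^+(I): an increasing homeomorphism of I onto itself. *)
Definition is_homeo_plus {R : realType} (I : set R) (phi : R -> R) : Prop :=
  (forall x, I x -> I (phi x)) /\
  (forall x y, I x -> I y -> x < y -> phi x < phi y) /\
  {within I, continuous phi} /\
  exists psi : R -> R,
    (forall x, I x -> I (psi x)) /\
    (forall x, I x -> psi (phi x) = x) /\
    (forall x, I x -> phi (psi x) = x) /\
    {within I, continuous psi}.

From mathcomp Require Import all_boot all_order all_algebra.
From mathcomp Require Import all_classical all_reals all_analysis.
Import Order.TTheory Order.NatMonotonyTheory GRing.Theory Num.Theory.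
Import numFieldNormedType.Exports.
Set Implicit Arguments. Unset Strict Implicit. Unset Printing Implicit Defensive.
Local Open Scope classical_set_scope.
Local Open Scope ring_scope.

(* Call x and y orbit-equivalent when phi^m x = phi^n y for some m, n, and put
   H x := F y for any y in (a, t) orbit-equivalent to x (an arbitrary value if
   there is none).  H is phi-invariant because x and phi x are equivalent.  It
   is well defined because two equivalent y, y' in (a, t) satisfy phi^k y = y'
   for some k (phi is injective); as phi is increasing, the orbit
   y, phi y, ..., phi^k y is monotone, so it stays below max (y, y') < t,
   where F is phi-invariant. *)

Definition same_orbit {T : Type} (phi : T -> T) (x y : T) : Prop :=
  exists m n, iter m phi x = iter n phi y.

Section Iterates.
Variables (T : Type) (phi : T -> T).

Lemma same_orbit_refl (x : T) : same_orbit phi x x.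
Proof. by exists 0%N, 0%N. Qed.

Lemma same_orbit_sym (x y : T) : same_orbit phi x y -> same_orbit phi y x.
Proof. by move=> [m [n e]]; exists n, m. Qed.

Lemma same_orbit_trans (x y z : T) :
  same_orbit phi x y -> same_orbit phi y z -> same_orbit phi x z.
Proof.
move=> [m [n exy]] [p [q eyz]]; exists (p + m)%N, (n + q)%N.
by rewrite iterD exy -iterD addnC iterD eyz -iterD.
Qed.

Lemma same_orbitS (x y : T) : same_orbit phi x (phi y) <-> same_orbit phi x y.
Proof.
split=> -[m [n e]]; first by exists m, n.+1; rewrite iterSr.
by exists m.+1, n; rewrite iterS e -iterS iterSr.
Qed.

Variable I : set T.
Hypothesis phiI : {homo phi : x / I x}.

Lemma iter_homo n : {homo iter n phi : x / I x}.
Proof. by elim: n => [|n IHn] x Ix //=; apply/phiI/IHn. Qed.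

Lemma iter_inj_in n : {in I &, injective phi} -> {in I &, injective (iter n phi)}.
Proof.
move=> phi_inj; elim: n => [|n IHn] x y Ix Iy //= e.
apply: IHn => //; apply: phi_inj e; rewrite in_setE; apply: iter_homo.
all: by rewrite -in_setE.
Qed.

End Iterates.

Section OrbitMonotone.
Local Open Scope order_scope.
Variables (d : Order.disp_t) (T : orderType d) (I : set T) (phi : T -> T).
Hypothesis phiI : {homo phi : x / I x}.
Hypothesis phi_incr : {in I &, {homo phi : x y / x < y}}.

Lemma iter_le_iterS y i : I y ->
  (iter i phi y <= iter i.+1 phi y) = (y <= phi y).
Proof.
move=> Iy; elim: i => [|i IHi] //.
rewrite [in LHS]iterS [iter i.+2 _ _]iterS (le_mono_in phi_incr) //.
all: by rewrite in_setE; apply: iter_homo.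
Qed.

Lemma iter_le_max y j k : I y -> (j <= k)%N ->
  iter j phi y <= Order.max y (iter k phi y).
Proof.
move=> Iy jk; have [y_le|phi_lt] := leP y (phi y).
- have orbit_incr i : iter i phi y <= iter i.+1 phi y by rewrite iter_le_iterS.
  by rewrite le_max (nondecnP (f := fun i => iter i phi y) orbit_incr _ _ jk) orbT.
- have orbit_decr i : iter i.+1 phi y <= iter i phi y.
    by apply: ltW; rewrite ltNge iter_le_iterS // -ltNge.
  by rewrite le_max (nonincnP (f := fun i => iter i phi y) orbit_decr _ _ (leq0n j)).
Qed.

Lemma iter_lt_of_ends y j k t : I y -> y < t -> iter k phi y < t ->
  (j <= k)%N -> iter j phi y < t.
Proof.
move=> Iy yt kt jk; apply: le_lt_trans (iter_le_max Iy jk) _.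
by rewrite gt_max yt kt.
Qed.

End OrbitMonotone.

Section InvariantExtension.
Variables (T S : Type) (I D : set T) (phi : T -> T) (F : T -> S).
Hypothesis phiI : {homo phi : x / I x}.
Hypothesis phi_inj : {in I &, injective phi}.
Hypothesis DI : D `<=` I.
Hypothesis D_orbit_convex : forall y j k,
  D y -> D (iter k phi y) -> (j <= k)%N -> D (iter j phi y).
Hypothesis F_phi : forall x, D x -> F (phi x) = F x.

Lemma F_iter y k : D y -> D (iter k phi y) -> F (iter k phi y) = F y.
Proof.
move=> Dy Dk; suff: forall j, (j <= k)%N -> F (iter j phi y) = F y by apply.
elim=> [|j IHj] jk //=.
rewrite F_phi ?IHj ?(ltnW jk) //.
exact: D_orbit_convex Dy Dk (ltnW jk).
Qed.

Lemma F_same_orbit y y' : D y -> D y' -> same_orbit phi y y' -> F y = F y'.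
Proof.
wlog nm : y y' / exists m n, (n <= m)%N /\ iter m phi y = iter n phi y'.
  move=> wlog_nm Dy Dy' [m [n e]]; have [nm|/ltnW mn] := leqP n m.
    by apply: wlog_nm => //; exists m, n.
  by symmetry; apply: wlog_nm => //; exists n, m.
move: nm => [m [n [nm e]]] Dy Dy' _.
have e' : iter (m - n) phi y = y'.
  apply: (iter_inj_in (n := n) phiI phi_inj); rewrite ?in_setE.
  - exact/(iter_homo phiI)/DI.
  - exact: DI.
  - by rewrite -iterD subnKC.
by rewrite -e' F_iter // e'.
Qed.

Lemma invariant_extension (s0 : S) :
  exists H : T -> S, (forall x, D x -> H x = F x) /\ (forall x, H (phi x) = H x).
Proof.
pose orbit_value x s := (forall y, D y -> same_orbit phi y x -> F y = s) /\
  ((forall y, D y -> ~ same_orbit phi y x) -> s = s0).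
have [H H_value] : {H : T -> S & forall x, orbit_value x (H x)}.
  apply: choice => x.
  have [[y [Dy yx]]|no_y] := pselect (exists y, D y /\ same_orbit phi y x).
    exists (F y); split=> [y' Dy' y'x|/(_ y Dy yx)//].
    by apply: F_same_orbit => //; apply: same_orbit_trans y'x (same_orbit_sym yx).
  by exists s0; split=> // y Dy yx; case: no_y; exists y.
exists H; split=> [x Dx|x].
  by symmetry; apply: (H_value x).1 => //; apply: same_orbit_refl.
have [[y [Dy yx]]|no_y] := pselect (exists y, D y /\ same_orbit phi y x).
  by rewrite -((H_value x).1 y Dy yx) -((H_value (phi x)).1 y Dy) // same_orbitS.
have not_yx y : D y -> ~ same_orbit phi y x by move=> Dy yx; apply: no_y; exists y.
by rewrite (H_value x).2 // (H_value (phi x)).2 // => y Dy /same_orbitS; apply: not_yx.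
Qed.

End InvariantExtension.

Theorem lemma3p1 (R : realType) (a b : \bar R) (S : Type) (s0 : S)
  (F : R -> S) (phi : R -> R) (t : R) :
  (a < b)%E ->
  is_homeo_plus (oitv a b) phi ->
  oitv a b t ->
  (forall x, (a < x%:E)%E -> x < t -> F x = F (phi x)) ->
  exists H : R -> S,
    (forall x, (a < x%:E)%E -> x < t -> H x = F x) /\
    (forall x, oitv a b x -> H (phi x) = H x).
Proof.
move=> _ [phiI [phi_incr _]] [_ tb] F_phi.
set I := oitv a b; set D := [set x | (a < x%:E)%E /\ x < t].
have DI : D `<=` I by move=> x [ax xt]; split; rewrite // (lt_trans _ tb) ?lte_fin.
have phi_incr_in : {in I &, {homo phi : x y / x < y}}.
  by move=> x y; rewrite !in_setE; apply: phi_incr.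
have phi_inj : {in I &, injective phi}.
  exact/inc_inj_in/le_mono_in.
have D_orbit_convex y j k : D y -> D (iter k phi y) -> (j <= k)%N -> D (iter j phi y).
  move=> Dy [_ kt] jk; split; first by case: (iter_homo phiI j (DI _ Dy)).
  exact: (iter_lt_of_ends phiI phi_incr_in (DI _ Dy) Dy.2 kt).
have [H [H_F H_phi]] := invariant_extension phiI phi_inj DI D_orbit_convex
  (fun x Dx => esym (F_phi x Dx.1 Dx.2)) s0.
by exists H; split=> [x ax xt|x _]; [exact: H_F|exact: H_phi].
Qed.
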